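(* Let $X$ be an idempotent unital commutative semiring whose intrinsic order is linear, i.e. $x\le y$ or $y\le x$ for all $x,y\in X$. Then $X$ is Frobenius.
   Context: A semiring $(X,+,0,\cdot)$: $(X,+,0)$ commutative monoid, $(X,\cdot)$ semigroup, distributivity, $0$ absorbing. Idempotent: $x+x=x$ for all $x$. Intrinsic order: $a\le b$ iff $a+x=b$ for some $x\in X$. $X$ is Frobenius if $(x+y)^n=x^n+y^n$ for all $x,y\in X$ and all integers $n\ge1$. *)

From mathcomp Require Import all_boot all_algebra.
Set Implicit Arguments. Unset Strict Implicit. Unset Printing Implicit Defensive.
Import GRing.Theory.
Local Open Scope ring_scope.

(* Semirings: MathComp's comPzSemiRingType = commutative monoid (+,0),
   commutative associative multiplication with unit 1, distributivity,
   0 absorbing.  (Pz: 0 = 1 allowed.) *)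

Definition idempotent_sr (X : comPzSemiRingType) : Prop :=
  forall x : X, x + x = x.

Definition sr_le (X : comPzSemiRingType) (a b : X) : Prop :=
  exists x : X, a + x = b.

Definition linear_intrinsic_order (X : comPzSemiRingType) : Prop :=
  forall x y : X, sr_le x y \/ sr_le y x.

Definition frobenius (X : comPzSemiRingType) : Prop :=
  forall (x y : X) (n : nat), (1 <= n)%N -> (x + y) ^+ n = x ^+ n + y ^+ n.

From mathcomp Require Import all_boot all_algebra.
Import GRing.Theory.
Local Open Scope ring_scope.

(* In an idempotent semiring [x <= y] means [x + y = y], and powers are
   monotone for this order: [y^(n+1) = (x + y) y^n = x y^n + y^(n+1)] and
   [x y^n] already absorbs [x^(n+1)].  A linear order makes one of [x], [y]
   absorb the other, so [(x + y)^n] is the larger of [x^n], [y^n], which is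
   [x^n + y^n]. *)

Section IdempotentSemiRing.

Variable X : pzSemiRingType.
Hypothesis addr_idem : forall x : X, x + x = x.

Lemma addr_absorb_exprn (x y : X) (n : nat) :
  x + y = y -> x ^+ n + y ^+ n = y ^+ n.
Proof.
move=> xy_y; elim: n => [|n IH]; first by rewrite !expr0 addr_idem.
have yS : y ^+ n.+1 = x * y ^+ n + y ^+ n.+1.
  by rewrite {1}exprS -{1}xy_y mulrDl exprS.
have xyn : x * y ^+ n = x ^+ n.+1 + x * y ^+ n.
  by rewrite -{1}IH mulrDr exprS.
by rewrite yS addrA -xyn.
Qed.

Lemma exprDn_absorb (x y : X) (n : nat) :
  x + y = y -> (x + y) ^+ n = x ^+ n + y ^+ n.
Proof. by move=> xy_y; rewrite addr_absorb_exprn // xy_y. Qed.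

End IdempotentSemiRing.

Lemma sr_le_absorb {X : comPzSemiRingType} {a b : X} :
  idempotent_sr X -> sr_le a b -> a + b = b.
Proof. by move=> idem [c <-]; rewrite addrA idem. Qed.

Theorem proposition3p2 (X : comPzSemiRingType) :
  idempotent_sr X -> linear_intrinsic_order X -> frobenius X.
Proof.
move=> idem lin x y n _.
case: (lin x y) => /(sr_le_absorb idem) absorb.
  exact: exprDn_absorb.
by rewrite addrC [RHS]addrC; apply: exprDn_absorb.
Qed.
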